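(* Let $s=a_1\cdots a_n$ be a permutation of $[n]$ in one-line form with $s\neq 12\cdots n$, write $\bar s_0=0$ and $\bar s_r=a_r$ for $1\le r\le n$, and let $\bar s=(\bar s_0,\bar s_1,\ldots,\bar s_n)$ as an $(n+1)$-cycle on $[n]^*=\{0,1,\ldots,n\}$. Let $\pi$ be the permutation of $[n]^*$ such that the plane permutation $(\bar s,\pi)$ has diagonal $\bar s\circ\pi^{-1}=p_t^{-1}$, where $p_t=(n,n-1,\ldots,1,0)$ (equivalently $\pi=p_t\bar s$). Then there exist indices $0\le i-1<j<k-1\le l\le n$ such that $$\pi(\bar s_{i-1})=\bar s_{k-1},\qquad \pi(\bar s_l)=\bar s_j.$$
   Context: Permutations are multiplied as composition of maps, $(\sigma\tau)(x)=\sigma(\tau(x))$. A plane permutation on a finite set is a pair $(s,\pi)$ with $s$ a cycle through all elements (written with a fixed starting element) and $\pi$ any permutation; its diagonal is $s\circ\pi^{-1}$. Note $p_t^{-1}=(0,1,2,\ldots,n)$. *)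

From mathcomp Require Import all_boot all_fingroup.
Set Implicit Arguments. Unset Strict Implicit. Unset Printing Implicit Defensive.

(* A permutation s = a_1 ... a_n of [n] = {1..n} is encoded as s : 'S_n acting
   on 'I_n = {0..n-1}, with a_r = (s (r-1)).+1 for 1 <= r <= n. *)

Definition sbar_at (n : nat) (s : 'S_n) (r : nat) : nat :=
  match r with
  | 0 => 0
  | r'.+1 => match @insub nat (fun x => x < n) _ r' with
             | Some i => (s i).+1
             | None => 0
             end
  end.

Definition sbar_seq (n : nat) (s : 'S_n) : seq nat := [seq sbar_at s r | r <- iota 0 n.+1].

Definition sbar_cyc (n : nat) (s : 'S_n) (x : nat) : nat := next (sbar_seq s) x.

Definition pt (n : nat) (x : nat) : nat := next (rev (iota 0 n.+1)) x.

Definition pi_plane (n : nat) (s : 'S_n) (x : nat) : nat := pt n (sbar_cyc s x).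

From mathcomp Require Import all_boot all_fingroup zify.
Set Implicit Arguments. Unset Strict Implicit.

(* Extend the sequence by \bar s_(n+1) = n+1; then pi(\bar s_r) = \bar s_(r+1) - 1
   for every r <= n. Let p send each value in {0..n+1} to its position in the
   extended sequence: p is a permutation fixing n+1, and it is not the identity
   since s is not. Take the last descent d of p, so that p(d+1) < p(d) and p is
   increasing on [d+1, n+1], and the last t >= d+1 with p(t) < p(d). Then
   p(d+1) <= p(t) < p(d) < p(t+1), and i = p(d+1), j = p(t), k = p(d)+1 and
   l = p(t+1)-1 satisfy the claim, because pi maps the entry at position
   p(v)-1 to v-1. *)

Lemma incr_leq_add (a N : nat) (f : nat -> nat) :
  (forall v, a <= v < N -> f v < f v.+1) ->
  forall v d, a <= v -> v + d <= N -> f v + d <= f (v + d).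
Proof.
move=> incr v d av; elim: d => [|d IHd] vdN; first by rewrite !addn0.
rewrite addnS in vdN *; have := IHd (ltnW vdN).
have := incr (v + d); rewrite vdN andbT (leq_trans av (leq_addr _ _)); lia.
Qed.

Section DescentPattern.

Variables (N : nat) (p : nat -> nat).
Hypothesis p_inj : {in [pred v | v <= N] &, injective p}.
Hypothesis p_le : forall v, v <= N -> p v <= N.

Lemma leq_succ_ltn v : v < N -> p v <= p v.+1 -> p v < p v.+1.
Proof.
move=> vN; rewrite leq_eqVlt => /orP[/eqP e|//].
by have := p_inj (ltnW vN) vN e => /n_Sn.
Qed.

Lemma exists_descent :
  (exists2 v, v <= N & p v != v) -> exists2 d, d < N & p d.+1 < p d.
Proof.
move=> [v vN pv].
have [/hasP[d]|/hasPn nodesc] := boolP (has (fun d => p d.+1 < p d) (iota 0 N)).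
  by rewrite mem_iota => /andP[_ dN] ?; exists d.
have incr w : 0 <= w < N -> p w < p w.+1.
  move=> /andP[_ wN]; apply: leq_succ_ltn; rewrite // leqNgt.
  by apply: nodesc; rewrite mem_iota.
have grow := incr_leq_add incr.
suff: p v = v by move/eqP: pv.
have := grow 0 v isT vN; have := grow v (N - v) isT.
rewrite subnKC // => /(_ (leqnn N)).
by rewrite !add0n; have := p_le (leqnn N); lia.
Qed.

Lemma descent_pattern : p N = N -> (exists2 v, v <= N & p v != v) ->
  exists d t, [/\ d < t, t < N, p d.+1 <= p t, p t < p d & p d < p t.+1].
Proof.
move=> pN /exists_descent [d0 d0N desc0].
have ex_desc : exists d, (d < N) && (p d.+1 < p d).
  by exists d0; rewrite d0N desc0.
have ub_desc d : (d < N) && (p d.+1 < p d) -> d <= N by case/andP=> /ltnW.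
have [d /andP[dN desc] dmax] := ex_maxnP ex_desc ub_desc.
have incr v : d.+1 <= v < N -> p v < p v.+1.
  move=> /andP[dv vN]; apply: leq_succ_ltn; rewrite // leqNgt.
  by apply/negP => descv; have := dmax v; rewrite vN descv => /(_ isT); lia.
have pmono v w : d < v -> v <= w -> w <= N -> p v <= p w.
  move=> dv vw wN; have := incr_leq_add incr (d := w - v) dv.
  by rewrite subnKC // => /(_ wN); lia.
have ex_below : exists t, (d < t <= N) && (p t < p d) by exists d.+1; rewrite leqnn dN.
have ub_below t : (d < t <= N) && (p t < p d) -> t <= N by case/andP=> /andP[].
have [t /andP[/andP[dt tN] ptd] tmax] := ex_maxnP ex_below ub_below.
have tN' : t < N.
  rewrite ltn_neqAle tN andbT; apply: contraTneq ptd => ->.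
  by rewrite pN -leqNgt p_le // ltnW.
exists d, t; split => //; first exact: pmono.
rewrite ltn_neqAle; apply/andP; split.
  by apply/eqP => /(p_inj (ltnW dN) tN'); lia.
by rewrite leqNgt; apply/negP => ptd'; have := tmax t.+1; rewrite ptd' tN' /=; lia.
Qed.

End DescentPattern.

Lemma next_cons_nth (T : eqType) (y0 : T) (q : seq T) r :
  uniq (y0 :: q) -> r <= size q -> next (y0 :: q) (nth y0 (y0 :: q) r) = nth y0 q r.
Proof. by move=> uq rq; rewrite next_nth mem_nth ?ltnS // index_uniq // ltnS. Qed.

Lemma ptE n x : x <= n -> pt n x = if x == 0 then n else x.-1.
Proof.
move=> xn; rewrite /pt next_rev ?iota_uniq // prev_nth mem_iota /= ltnS xn.
case: x xn => [|x] xn /=.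
  rewrite memNindex ?mem_iota // size_iota.
  by rewrite -[nth 0 _ n]/(nth 0 (iota 0 n.+1) n) nth_iota.
have -> : x.+1 = nth 0 (iota 1 n) x by rewrite nth_iota.
rewrite index_uniq ?iota_uniq ?size_iota //.
by rewrite -[nth 0 _ x]/(nth 0 (iota 0 n.+1) x) nth_iota // ltnW.
Qed.

Section ExtendedSequence.

Variables (n : nat) (s : 'S_n).

Lemma sbar_atS (i : 'I_n) : sbar_at s i.+1 = (s i).+1.
Proof. by rewrite /= valK. Qed.

Lemma sbar_at_le r : sbar_at s r <= n.
Proof. by case: r => [|r] //=; case: insubP. Qed.

Lemma sbar_at_inj r r' : r <= n -> r' <= n -> sbar_at s r = sbar_at s r' -> r = r'.
Proof.
case: r => [|r] rn; case: r' => [|r'] r'n //.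
- by rewrite -[r']/(val (Ordinal r'n)) sbar_atS.
- by rewrite -[r]/(val (Ordinal rn)) sbar_atS.
rewrite -[r]/(val (Ordinal rn)) -[r']/(val (Ordinal r'n)) !sbar_atS.
by case=> /val_inj /perm_inj /(congr1 val) /= ->.
Qed.

Definition sbar_ext r := if r <= n then sbar_at s r else n.+1.

Definition sbar_pos v :=
  if v is v'.+1 then oapp (fun i : 'I_n => (s^-1%g i).+1) n.+1 (insub v') else 0.

Lemma pi_plane_sbar r : r <= n -> pi_plane s (sbar_at s r) = (sbar_ext r.+1).-1.
Proof.
move=> rn.
have sbar_nth : sbar_at s r = nth 0 (sbar_seq s) r.
  by rewrite /sbar_seq (nth_map 0) ?size_iota ?ltnS // nth_iota.
have uniq_sbar : uniq (sbar_seq s).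
  rewrite /sbar_seq map_inj_in_uniq ?iota_uniq // => a b.
  by rewrite !mem_iota !ltnS => /andP[_ an] /andP[_ bn]; apply: sbar_at_inj.
rewrite /pi_plane /sbar_cyc sbar_nth /sbar_ext.
rewrite -[sbar_seq s]/(0 :: map (sbar_at s) (iota 1 n)) next_cons_nth //;
  last by rewrite size_map size_iota.
case: ltnP => nr; last by rewrite nth_default ?size_map ?size_iota // ptE.
rewrite (nth_map 0) ?size_iota // nth_iota // add1n ptE ?sbar_at_le //.
by rewrite -[r]/(val (Ordinal nr)) sbar_atS.
Qed.

Lemma sbar_pos_le v : v <= n.+1 -> sbar_pos v <= n.+1.
Proof. by case: v => [|v] //= _; case: insubP => //= i _ _; rewrite ltnS ltnW. Qed.

Lemma sbar_pos_gt0 v : 0 < v -> 0 < sbar_pos v.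
Proof. by case: v => [|v] //= _; case: insubP. Qed.

Lemma sbar_pos_last : sbar_pos n.+1 = n.+1.
Proof. by rewrite /= insubN ?ltnn. Qed.

Lemma sbar_posK v : v <= n.+1 -> sbar_ext (sbar_pos v) = v.
Proof.
case: v => [|v] //= vn; case: insubP => [i _ <-|] /=.
  by rewrite /sbar_ext ltn_ord sbar_atS permKV.
by rewrite /sbar_ext ltnn; lia.
Qed.

Lemma sbar_pos_inj : {in [pred v | v <= n.+1] &, injective sbar_pos}.
Proof. by apply: (can_in_inj (g := sbar_ext)) => v; apply: sbar_posK. Qed.

Lemma sbar_at_pos v : v <= n.+1 -> sbar_pos v <= n -> sbar_at s (sbar_pos v) = v.
Proof. by move=> vn pvn; have := sbar_posK vn; rewrite /sbar_ext pvn. Qed.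

Lemma pi_plane_sbar_pos v :
  0 < v <= n.+1 -> pi_plane s (sbar_at s (sbar_pos v).-1) = v.-1.
Proof.
move=> /andP[v0 vn]; have pv0 := sbar_pos_gt0 v0; have pvn := sbar_pos_le vn.
by rewrite pi_plane_sbar ?prednK ?sbar_posK //; lia.
Qed.

Lemma sbar_pos_neq_id : s != 1%g -> exists2 v, v <= n.+1 & sbar_pos v != v.
Proof.
move=> s1; have [/hasP[v]|/hasPn fixed] :=
  boolP (has (fun v => sbar_pos v != v) (iota 0 n.+2)).
  by rewrite mem_iota => /andP[_ vn] ?; exists v.
case/eqP: s1; apply/permP => i; rewrite perm1.
have := fixed i.+1; rewrite mem_iota /= !ltnS ltnW // negbK => /(_ isT).
rewrite /= valK /= => /eqP[si].
by rewrite -{1}(val_inj si) permKV.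
Qed.

End ExtendedSequence.

Theorem lemma5 (n : nat) (s : 'S_n) :
  s != 1%g ->
  exists i j k l : nat,
    [/\ 1 <= i, i - 1 < j, j < k - 1, k - 1 <= l & l <= n]%N /\
    pi_plane s (sbar_at s (i - 1)) = sbar_at s (k - 1) /\
    pi_plane s (sbar_at s l) = sbar_at s j.
Proof.
move=> s1.
have [d [t [dt tn pdt ptd pdt1]]] :=
  descent_pattern (@sbar_pos_inj n s) (@sbar_pos_le n s) (sbar_pos_last s)
    (sbar_pos_neq_id s1).
have pd1 := sbar_pos_gt0 s (ltn0Sn d).
have pt1 := sbar_pos_le s tn.
exists (sbar_pos s d.+1), (sbar_pos s t), (sbar_pos s d).+1, (sbar_pos s t.+1).-1.
rewrite !subn1; split; first by split; lia.
rewrite pi_plane_sbar_pos ?pi_plane_sbar_pos ?sbar_at_pos //; lia.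
Qed.
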